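(* Let $p$ be a prime and $n>1$ an integer, and let $s$ denote the smallest prime divisor of $n$. Then for each $t\in\{2,3\}$ there exists a $t$-fold blocking set of size $t\left(p^n+p^{n(s-1)/s}+1\right)$ in $\mathrm{PG}(2,p^n)$.
   Context: $\mathrm{PG}(2,q)$ denotes the Desarguesian projective plane over the finite field $\mathbb{F}_q$. A $t$-fold blocking set of a projective plane is a set of points meeting every line of the plane in at least $t$ points. *)

From HB Require Import structures.
From mathcomp Require Import all_boot all_order all_algebra all_field.
Set Implicit Arguments. Unset Strict Implicit. Unset Printing Implicit Defensive.
Import GRing.Theory.
Local Open Scope ring_scope.

(* A point is a 1-dimensional subspace of F^3, represented as the set of
   its vectors {a v | a in F} for some nonzero row vector v.
   A line is given by a nonzero column vector l (its dual coordinates);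
   the point spanned by v lies on l iff v *m l = 0. *)
Definition pg2_point (F : finFieldType) (P : {set 'rV[F]_3}) : bool :=
  [exists v : 'rV[F]_3, (v != 0) && (P == [set a *: v | a : F])].

Definition pg2_incident (F : finFieldType) (P : {set 'rV[F]_3}) (l : 'cV[F]_3) : bool :=
  [forall v in P, v *m l == 0].

Definition pg2_tfold_blocking_set (F : finFieldType) (t : nat)
    (B : {set {set 'rV[F]_3}}) : Prop :=
  (forall P, P \in B -> pg2_point P) /\
  (forall l : 'cV[F]_3, l != 0 -> (t <= #|[set P in B | pg2_incident P l]|)%N).

(* Let s be the least prime factor of n and r = p ^ (n / s), so that q = r ^ s and
   q ^ ((s - 1) / s) = q / r; let K = GF(r) be the subfield of F = GF(q) and T : F -> K
   the trace.  If f is a K-linear injection of F x K into F^3, the points spanned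
   by its nonzero values form a blocking set: a line is a linear form F^3 -> F, and since
   F x K has r q > q elements the form vanishes on some nonzero f (x, c).  Normalising
   c = 1, or c = 0 and T x = 1, or c = 0 and T x = 0, shows that there are at most
   q + q / r + 1 such points.  Take for f a Redei-type map (x, c) |-> (x + d nu c, T x + be c, c)
   and let rot be the linear map (y1, y2, y3) |-> (mu y3, y1 / nu, y2), whose cube is scalar.
   For suitable parameters be, nu, d, mu (mu is found by counting trace fibres) the images
   of the set under rot ^+ 0, rot ^+ 1, rot ^+ 2 are pairwise disjoint, so the union of the
   first t of them is a t-fold blocking set with at most t (q + q / r + 1) points; adding
   further points gives one of exactly that size. *)

From HB Require Import structures.
From mathcomp Require Import all_boot all_order all_algebra all_field.
From mathcomp Require Import zify ring.
Set Implicit Arguments. Unset Strict Implicit. Unset Printing Implicit Defensive.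
Import GRing.Theory.
Local Open Scope ring_scope.

Lemma exists_subset_card (T : finType) (A S : {set T}) (N : nat) :
  A \subset S -> (#|A| <= N <= #|S|)%N ->
  exists B : {set T}, [/\ A \subset B, B \subset S & #|B| = N].
Proof.
move=> sAS /andP[leAN leNS].
pose C := [set x in take (N - #|A|) (enum (S :\: A))].
have /subsetDP[sCS disCA] : C \subset S :\: A.
  by apply/subsetP => x; rewrite inE => /mem_take; rewrite mem_enum.
have cardC : #|C| = (N - #|A|)%N.
  rewrite cardsE (card_uniqP _) ?take_uniq ?enum_uniq // size_take -cardE.
  by rewrite cardsD (setIidPr sAS); case: ltnP => //; lia.
exists (A :|: C); split; [exact: subsetUl | by rewrite subUset sAS sCS |].
have /eqP-> : #|A :|: C| == (#|A| + #|C|)%N.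
  by rewrite (leq_card_setU A C).2 disjoint_sym.
by rewrite cardC; lia.
Qed.

Lemma card_roots (R : finIdomainType) (p : {poly R}) :
  p != 0 -> (#|[pred x | root p x]| < size p)%N.
Proof.
move=> nz_p; rewrite cardE; apply: max_poly_roots => //; last exact: enum_uniq.
by apply/allP => x; rewrite mem_enum.
Qed.

Lemma exists_notin (T : finType) (A : {pred T}) : (#|A| < #|T|)%N -> exists x, x \notin A.
Proof.
move=> ltAT; apply/existsP; rewrite -negb_forall; apply: contraL ltAT => /forallP inA.
by rewrite -leqNgt -cardsT; apply/subset_leq_card/subsetP => x _; apply: inA.
Qed.

Lemma card_bigcup_le (T I : finType) (P : pred I) (A : I -> {set T}) :
  (#|\bigcup_(i | P i) A i| <= \sum_(i | P i) #|A i|)%N.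
Proof.
elim/big_ind2: _ => [|m B n C leBm leCn|//]; first by rewrite cards0.
exact: leq_trans (leq_card_setU B C) (leq_add leBm leCn).
Qed.

Section ProjectivePlane.
Variable F : finFieldType.

Definition row3 (a b c : F) : 'rV[F]_3 := \row_(i < 3) [:: a; b; c]`_i.

Lemma row3_eta (u : 'rV[F]_3) : u = row3 (u 0 0) (u 0 1) (u 0 2).
Proof.
apply/rowP => -[[|[|[|i]]] lti]; rewrite mxE //=; congr (u 0 _); exact: val_inj.
Qed.

Lemma row3_inj a b c a' b' c' :
  row3 a b c = row3 a' b' c' -> [/\ a = a', b = b' & c = c'].
Proof.
by move=> e; split; [move/rowP/(_ 0): e | move/rowP/(_ 1): e | move/rowP/(_ 2): e];
  rewrite !mxE.
Qed.

Lemma row3D a b c a' b' c' : row3 a b c + row3 a' b' c' = row3 (a + a') (b + b') (c + c').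
Proof. by apply/rowP => -[[|[|[|i]]] lti]; rewrite !mxE //= addr0. Qed.

Lemma row3B a b c a' b' c' : row3 a b c - row3 a' b' c' = row3 (a - a') (b - b') (c - c').
Proof. by apply/rowP => -[[|[|[|i]]] lti]; rewrite !mxE //= subr0. Qed.

Lemma row3Z k a b c : k *: row3 a b c = row3 (k * a) (k * b) (k * c).
Proof. by apply/rowP => -[[|[|[|i]]] lti]; rewrite !mxE //= mulr0. Qed.

Lemma row3_eq0 a b c : (row3 a b c == 0) = [&& a == 0, b == 0 & c == 0].
Proof.
have -> : 0 = row3 0 0 0 by rewrite -(scale0r (row3 0 0 0)) row3Z !mul0r.
by apply/eqP/and3P => [/row3_inj [-> -> ->]|[/eqP-> /eqP-> /eqP->]].
Qed.

Definition pg2_pt (u : 'rV[F]_3) : {set 'rV[F]_3} := [set k *: u | k : F].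

Lemma pg2_point_pt u : u != 0 -> pg2_point (pg2_pt u).
Proof. by move=> nz_u; apply/existsP; exists u; rewrite nz_u eqxx. Qed.

Lemma pg2_incident_pt u (l : 'cV[F]_3) : u *m l = 0 -> pg2_incident (pg2_pt u) l.
Proof.
by move=> ul0; apply/forall_inP => _ /imsetP[k _ ->]; rewrite -scalemxAl ul0 scaler0.
Qed.

Lemma pg2_ptZ k u : k != 0 -> pg2_pt (k *: u) = pg2_pt u.
Proof.
move=> nz_k; apply/setP => w; apply/imsetP/imsetP => -[j _ ->].
  by exists (j * k); rewrite ?scalerA.
by exists (j / k); rewrite // scalerA mulfVK.
Qed.

Lemma mem_pg2_pt u : u \in pg2_pt u.
Proof. by apply/imsetP; exists 1; rewrite ?scale1r. Qed.

Lemma pg2_pt_eqP u v :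
  reflect (exists2 k, k != 0 & u = k *: v) (pg2_pt u == pg2_pt v).
Proof.
apply: (iffP eqP) => [e|[k nz_k ->]]; last exact: pg2_ptZ.
have /imsetP[k _ def_u] : u \in pg2_pt v by rewrite -e mem_pg2_pt.
have [k0|nz_k] := eqVneq k 0; last by exists k.
have /imsetP[j _ v_ju] : v \in pg2_pt u by rewrite e mem_pg2_pt.
exists 1; first exact: oner_neq0.
by rewrite scale1r def_u k0 scale0r v_ju def_u k0 scale0r scaler0.
Qed.

Lemma pg2_pt_mulmx (A : 'M[F]_3) u v : A \in unitmx ->
  (pg2_pt (u *m A) == pg2_pt (v *m A)) = (pg2_pt u == pg2_pt v).
Proof.
move=> unitA; apply/pg2_pt_eqP/pg2_pt_eqP => -[k nz_k e]; exists k => //.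
  by apply: (can_inj (mulmxK unitA)); rewrite /= e scalemxAl.
by rewrite e scalemxAl.
Qed.

Definition pg2_rep (z : (F * F) + (F + unit)) : 'rV[F]_3 :=
  match z with
  | inl (x, y) => row3 x y 1
  | inr (inl x) => row3 x 1 0
  | inr (inr _) => row3 1 0 0
  end.

Lemma pg2_rep_inj : injective (fun z => pg2_pt (pg2_rep z)).
Proof.
move=> [[x y]|[x|[]]] [[x' y']|[x'|[]]] /eqP/pg2_pt_eqP[k nz_k] /=;
  rewrite row3Z => /row3_inj; rewrite ?(mulr0, mulr1) => -[e1 e2 e3].
all: try by move: nz_k; rewrite -?e2 -?e3 eqxx.
all: first [done | by move/eqP: e3; rewrite oner_eq0 | by move/eqP: e2; rewrite oner_eq0
           | by subst k; rewrite e1 ?e2 !mul1r].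
Qed.

Lemma card_pg2_points :
  (#|F| * #|F| + (#|F| + 1) <= #|[set P : {set 'rV[F]_3} | pg2_point P]|)%N.
Proof.
have := card_imset [set: (F * F) + (F + unit)] pg2_rep_inj.
rewrite cardsT card_sum card_prod card_sum card_unit => <-.
apply/subset_leq_card/subsetP => _ /imsetP[z _ ->]; rewrite inE.
by case: z => [[x y]|[x|[]]]; apply: pg2_point_pt; rewrite row3_eq0 ?oner_eq0 ?andbF.
Qed.

Lemma pg2_blocking_setU t1 t2 (B1 B2 : {set {set 'rV[F]_3}}) :
  [disjoint B1 & B2] ->
  pg2_tfold_blocking_set t1 B1 -> pg2_tfold_blocking_set t2 B2 ->
  pg2_tfold_blocking_set (t1 + t2) (B1 :|: B2).
Proof.
move=> disB [ptB1 blB1] [ptB2 blB2].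
split=> [P /setUP[/ptB1|/ptB2] //|l nz_l].
pose on_l (B : {set {set 'rV[F]_3}}) := [set P in B | pg2_incident P l].
have on_lS B : on_l B \subset B by apply/subsetP => P; rewrite inE => /andP[].
have -> : [set P in B1 :|: B2 | pg2_incident P l] = on_l B1 :|: on_l B2.
  by apply/setP => P; rewrite !inE andb_orl.
have /eqP-> : #|on_l B1 :|: on_l B2| == (#|on_l B1| + #|on_l B2|)%N.
  by rewrite (leq_card_setU _ _).2 (disjointW (on_lS _) (on_lS _)).
exact: leq_add (blB1 l nz_l) (blB2 l nz_l).
Qed.

Lemma pg2_blocking_setS t (B1 B2 : {set {set 'rV[F]_3}}) :
  B1 \subset B2 -> {in B2, forall P, pg2_point P} ->
  pg2_tfold_blocking_set t B1 -> pg2_tfold_blocking_set t B2.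
Proof.
move=> sB12 ptB2 [_ blB1]; split=> // l nz_l.
apply: leq_trans (blB1 l nz_l) (subset_leq_card _).
by apply/subsetP => P; rewrite !inE => /andP[/(subsetP sB12)-> ->].
Qed.

End ProjectivePlane.

Section Trace.
Variables (F : finFieldType) (r s : nat).
Hypotheses (r_gt1 : (1 < r)%N) (s_gt1 : (1 < s)%N).
Hypotheses (r_pchar : [pchar F].-nat r) (cardF : #|F| = (r ^ s)%N).

Definition fixed_field : {pred F} := fun x => x ^+ r == x.
Definition trace (x : F) : F := \sum_(i < s) x ^+ (r ^ i).
Local Notation K := fixed_field.
Local Notation T := trace.

Lemma fixed_field_divring_closed : divring_closed K.
Proof.
rewrite /K; split=> [|x y|x y]; rewrite !unfold_in /= ?expr1n // => /eqP xr /eqP yr.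
  by rewrite exprDn_pchar ?exprNn_pchar // xr yr.
by rewrite expr_div_n xr yr.
Qed.

HB.instance Definition _ :=
  GRing.isDivringClosed.Build F fixed_field fixed_field_divring_closed.

Lemma fixed_fieldX i x : x \in K -> x ^+ (r ^ i) = x.
Proof.
rewrite unfold_in /= => /eqP xr.
by elim: i => [|i IHi]; rewrite ?expr1 // expnSr exprM IHi.
Qed.

Lemma trace_is_zmod_morphism : zmod_morphism T.
Proof.
move=> x y; rewrite /T -sumrB; apply: eq_bigr => i _.
by rewrite exprDn_pchar ?exprNn_pchar ?pnatX ?r_pchar.
Qed.

HB.instance Definition _ := GRing.isZmodMorphism.Build F F trace trace_is_zmod_morphism.

Lemma traceZ (k x : F) : k \in K -> T (k * x) = k * T x.
Proof.
by move=> kK; rewrite /T mulr_sumr; apply: eq_bigr => i _; rewrite exprMn (fixed_fieldX _ kK).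
Qed.

Lemma frobenius_sum I (e : seq I) (P : pred I) (f : I -> F) :
  (\sum_(i <- e | P i) f i) ^+ r = \sum_(i <- e | P i) f i ^+ r.
Proof.
apply: (big_morph (fun y => y ^+ r)) => [y z|]; first exact: exprDn_pchar.
by rewrite expr0n gtn_eqF // ltnW.
Qed.

Lemma trace_fixed x : T x \in K.
Proof.
rewrite unfold_in /= /T frobenius_sum -(prednK (ltnW s_gt1)).
rewrite big_ord_recr big_ord_recl /= -exprM -expnSr prednK ?(ltnW s_gt1) //.
rewrite -cardF expf_card expn0 expr1 addrC; apply/eqP; congr (_ + _).
by apply: eq_bigr => i _; rewrite -exprM -expnSr.
Qed.

Lemma card_fixed_field : (#|K| <= r)%N.
Proof.
have size_p : size ('X^r - 'X : {poly F}) = r.+1.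
  by rewrite size_polyDl ?size_polyXn // size_polyN size_polyX ltnS.
have nz_p : 'X^r - 'X != 0 :> {poly F} by rewrite -size_poly_eq0 size_p.
rewrite -ltnS -size_p -(eq_card (_ : [pred x | root ('X^r - 'X) x] =i K)) ?card_roots //.
by move=> x; rewrite !unfold_in /= /root !hornerE subr_eq0.
Qed.

Definition trace_poly (g v : F) : {poly F} :=
  \sum_(i < s) g ^+ (r ^ i) *: 'X^(r ^ i) - v%:P.

Lemma trace_polyE (g v x : F) : (trace_poly g v).[x] = T (g * x) - v.
Proof.
rewrite hornerD hornerN hornerC horner_sum; congr (_ - _).
by apply: eq_bigr => i _; rewrite hornerZ hornerXn exprMn.
Qed.

Lemma size_trace_poly (g v : F) : g != 0 -> size (trace_poly g v) = (r ^ s.-1).+1.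
Proof.
move=> nz_g; have r_gt0 := ltnW r_gt1.
rewrite /trace_poly -(prednK (ltnW s_gt1)) big_ord_recr /= addrAC addrC.
rewrite size_polyDl size_scale ?size_polyXn ?expf_neq0 // ltnS.
apply: leq_trans (size_polyD _ _) _; rewrite geq_max size_polyN size_polyC.
rewrite (leq_trans (leq_b1 _)) ?expn_gt0 ?r_gt0 // andbT.
apply: (big_ind (fun p : {poly F} => size p <= r ^ s.-1)%N) => [|p q|i _].
- by rewrite size_poly0.
- by move=> ? ?; rewrite (leq_trans (size_polyD _ _)) // geq_max; apply/andP.
- by rewrite (leq_trans (size_scale_leq _ _)) // size_polyXn ltn_exp2l.
Qed.

Lemma card_trace_fiber (g v : F) :
  g != 0 -> (#|[pred x | T (g * x)%R == v]| <= r ^ s.-1)%N.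
Proof.
move=> nz_g; rewrite -ltnS -(size_trace_poly v nz_g).
rewrite -(eq_card (_ : [pred x | root (trace_poly g v) x] =i _)) ?card_roots //.
  by rewrite -size_poly_eq0 size_trace_poly.
by move=> x; rewrite !inE /root trace_polyE subr_eq0.
Qed.

Lemma exists_trace1 : exists x, T x = 1.
Proof.
have [x] : exists x, x \notin [pred x | T (1 * x) == 0].
  apply: exists_notin; apply: leq_ltn_trans (card_trace_fiber 0 (oner_neq0 F)) _.
  by rewrite cardF ltn_exp2l // prednK // ltnW.
rewrite inE mul1r => nz_Tx; exists ((T x)^-1 * x).
by rewrite traceZ ?mulVf // rpredV // trace_fixed.
Qed.

Lemma exists_notin_fixed : exists x, x \notin K.
Proof.
apply: exists_notin; apply: leq_ltn_trans card_fixed_field _.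
by rewrite cardF -{1}(expn1 r) ltn_exp2l.
Qed.

Lemma fixed_field01 : [set 0; 1] \subset K.
Proof. by apply/subsetP => x; rewrite !inE => /orP[] /eqP->; rewrite ?rpred0 ?rpred1. Qed.

Lemma card_fixed_field_ge2 : (2 <= #|K|)%N.
Proof.
by apply: leq_trans (subset_leq_card fixed_field01); rewrite cards2 eq_sym oner_eq0.
Qed.

Lemma fixed_field_binary : (#|K| <= 2)%N -> K =i [set 0; 1].
Proof.
move=> leK2; have card01 : #|[set 0; 1] : {set F}| = #|K|.
  by apply/eqP; rewrite eqn_leq subset_leq_card ?fixed_field01 // cards2 eq_sym oner_eq0.
by move=> x; rewrite (elimT (subset_cardP card01) fixed_field01).
Qed.

Lemma exists_trace_pair (gam : F) : (#|K| <= 2)%N -> gam != 0 ->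
  exists nu, T nu = 1 /\ T (gam * nu) = 1.
Proof.
move=> /fixed_field_binary K01 nz_gam.
have T01 x : T x = 0 \/ T x = 1.
  by have := trace_fixed x; rewrite K01 !inE => /orP[] /eqP; [left|right].
have [x1 Tx1] := exists_trace1.
have [Tgx1|] := T01 (gam * x1); last by exists x1.
pose x2 := gam^-1 * x1.
have Tgx2 : T (gam * x2) = 1 by rewrite /x2 mulVKf.
have [Tx2|] := T01 x2; last by exists x2.
by exists (x1 + x2); rewrite mulrDr !raddfD /= Tx1 Tx2 Tgx1 Tgx2 addr0 add0r.
Qed.

Lemma exists_params : exists be nu d : F,
  [/\ be \notin K, T nu = 1, d \in K, d != T (nu * be) - 1
    & d != T (nu * (be * be)) + T (nu * be) * (1 - T (nu * be))].
Proof.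
have [be beK] := exists_notin_fixed.
have [lt2K|leK2] := ltnP 2 #|K|.
  have [nu Tnu] := exists_trace1.
  pose v1 := T (nu * be) - 1.
  pose v2 := T (nu * (be * be)) + T (nu * be) * (1 - T (nu * be)).
  have /subsetPn[d dK] : ~~ (K \subset [set v1; v2]).
    apply: contraTN lt2K => /subset_leq_card/leq_trans; rewrite -leqNgt; apply.
    by rewrite cards2; case: (_ != _).
  by rewrite !inE negb_or => /andP[dv1 dv2]; exists be, nu, d.
(* Now [K = GF(2)]; [d = T (nu * be)] works as soon as [T (nu * be) != T (nu * (be * be))],
   i.e. [T (nu * (be + be * be)) = 1]. *)
have K01 := fixed_field_binary leK2.
have m1 : -1 = 1 :> F.
  have := rpredNr (rpred1 K); rewrite K01 !inE oppr_eq0 oner_eq0 /=.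
  exact/eqP.
have nz_be : be != 0 by apply: contraNneq beK => ->; apply: rpred0.
have nz_be1 : 1 + be != 0.
  by apply: contraNneq beK => /(canRL (addKr 1)); rewrite addr0 => ->; rewrite rpredN rpred1.
have [nu [Tnu]] := exists_trace_pair leK2 (mulf_neq0 nz_be nz_be1).
rewrite mulrDr mulr1 mulrDl !raddfD /= (mulrC _ nu) (mulrC _ nu) => Tb_g.
exists be, nu, (T (nu * be)); split => //; first exact: trace_fixed.
  by rewrite -subr_eq0 opprB addrC subrK oner_eq0.
have -> : T (nu * be) * (1 - T (nu * be)) = 0.
  have := trace_fixed (nu * be); rewrite K01 !inE.
  by case/orP=> /eqP->; rewrite ?mul0r ?subrr ?mulr0.
apply/eqP; rewrite addr0 => b_g; move/eqP: Tb_g.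
by rewrite -b_g -[X in X + X]mul1r -mulrDl -{1}m1 addNr mul0r eq_sym oner_eq0.
Qed.

Lemma exists_trace_avoid (I : finType) (A : {pred I}) (g v : I -> F) :
  (#|A| < r)%N -> {in A, forall i, g i != 0} ->
  exists2 mu : F, mu != 0 & {in A, forall i, T (g i * mu) != v i}.
Proof.
move=> ltAr nz_g.
pose bad := \bigcup_(i in A) [set mu | T (g i * mu) == v i].
have card_bad : (#|bad| <= #|A| * r ^ s.-1)%N.
  apply: leq_trans (card_bigcup_le _ _) _; rewrite -sum1_card big_distrl /=.
  by apply: leq_sum => i Ai; rewrite mul1n cardsE card_trace_fiber ?nz_g.
have /subsetPn[mu] : ~~ ([set~ 0] \subset bad).
  have R2 : (2 <= r ^ s.-1)%N.
    by rewrite (leq_trans r_gt1) // -{1}(expn1 r) leq_exp2l // -ltnS prednK // ltnW.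
  have qR : #|F| = (r * r ^ s.-1)%N by rewrite cardF -expnS prednK // ltnW.
  apply/negP => /subset_leq_card; rewrite cardsC1 qR => /leq_trans/(_ card_bad).
  by move: ltAr R2; move: #|A| (r ^ s.-1)%N => a R; nia.
rewrite !inE => nz_mu bad_mu; exists mu => // i Ai.
by apply: contraNneq bad_mu => Tv; apply/bigcupP; exists i; rewrite ?inE ?Tv.
Qed.

Definition redei_domain : {set F * F} := setX [set: F] [set c in K] :\ (0 : F * F).

Definition redei_set (f : F -> F -> 'rV[F]_3) : {set {set 'rV[F]_3}} :=
  [set pg2_pt (f xc.1 xc.2) | xc in redei_domain].

(* [f] is a [K]-linear injection of [F x K] into [F^3] which on [(ker T) x {0}] is the
   [F]-linear map [x |-> x *: w]; the last clause is what leaves a single point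
   with [c = 0] and [T x = 0]. *)
Definition redei_param (f : F -> F -> 'rV[F]_3) (w : 'rV[F]_3) : Prop :=
  [/\ forall x1 c1 x2 c2, f (x1 - x2) (c1 - c2) = f x1 c1 - f x2 c2,
      forall k x c, k \in K -> f (k * x) (k * c) = k *: f x c,
      forall x c, c \in K -> f x c = 0 -> x = 0 /\ c = 0
    & forall x, T x = 0 -> f x 0 = x *: w].

Lemma redei_domainP x c :
  reflect (c \in K /\ (x, c) != 0) ((x, c) \in redei_domain).
Proof. by rewrite !inE andbC; apply: andP. Qed.

Lemma redei_param_mulmx f w (A : 'M[F]_3) : A \in unitmx ->
  redei_param f w -> redei_param (fun x c => f x c *m A) (w *m A).
Proof.
move=> unitA [fB fZ f_inj f_ker]; split=> [x1 c1 x2 c2|k x c kK|x c cK|x Tx0].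
- by rewrite fB mulmxBl.
- by rewrite fZ // scalemxAl.
- by move=> /(congr1 (mulmx^~ (invmx A))); rewrite mulmxK // mul0mx; apply: f_inj.
- by rewrite f_ker // scalemxAl.
Qed.

Section RedeiSet.
Variables (f : F -> F -> 'rV[F]_3) (w : 'rV[F]_3).
Hypothesis fP : redei_param f w.

Lemma redei_set_point P : P \in redei_set f -> pg2_point P.
Proof.
case: fP => _ _ f_inj _ /imsetP[[x c] /redei_domainP[cK nz_xc] /= ->].
by apply: pg2_point_pt; apply: contra_neq nz_xc => /(f_inj _ _ cK)[-> ->].
Qed.

Lemma redei_set_incident (l : 'cV[F]_3) :
  exists2 P, P \in redei_set f & pg2_incident P l.
Proof.
case: fP => fB _ _ _.
pose D := setX [set: F] [set c in K].
have ltFD : (#|F| < #|D|)%N.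
  rewrite cardsX cardsT cardsE -[X in (X < _)%N]muln1 ltn_mul2l card_fixed_field_ge2.
  by rewrite andbT; apply/card_gt0P; exists 0.
have /dinjectivePn[[x1 c1] D1 [[x2 c2] /andP[ne12 D2] /= e12]] :
    ~~ dinjectiveb (fun xc : F * F => f xc.1 xc.2 *m l) D.
  by apply: contraTN ltFD => /dinjectiveP/leq_card_in; rewrite card_mx -leqNgt.
exists (pg2_pt (f (x1 - x2) (c1 - c2))).
  apply/imsetP; exists (x1 - x2, c1 - c2) => //; apply/redei_domainP.
  move: D1 D2; rewrite !inE /= => c1K c2K; split; first exact: rpredB.
  by rewrite (_ : (_, _) = (x1, c1) - (x2, c2)) // subr_eq0 eq_sym.
by apply: pg2_incident_pt; rewrite fB mulmxBl e12 subrr.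
Qed.

Lemma redei_set_blocking : pg2_tfold_blocking_set 1 (redei_set f).
Proof.
split=> [|l _]; first exact: redei_set_point.
have [P fP_P lP] := redei_set_incident l.
by rewrite card_gt0; apply/set0Pn; exists P; rewrite inE fP_P.
Qed.

Lemma card_redei_set : (#|redei_set f| <= #|F| + r ^ s.-1 + 1)%N.
Proof.
case: fP => _ fZ _ f_ker.
pose A := [set pg2_pt (f x 1) | x : F].
pose C := [set pg2_pt (f x 0) | x in [pred x | T (1 * x) == 1]].
have sub : redei_set f \subset A :|: C :|: [set pg2_pt w].
  apply/subsetP => _ /imsetP[[x c] /redei_domainP[cK nz_xc] /= ->].
  have [c0|nz_c] := eqVneq c 0; last first.
    have -> : f x c = c *: f (c^-1 * x) 1 by rewrite -fZ // mulVKf // mulr1.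
    by rewrite pg2_ptZ // !inE /A (imset_f (fun y => pg2_pt (f y 1))).
  have nz_x : x != 0 by apply: contra_neq nz_xc => ->; rewrite c0.
  rewrite c0; have [Tx0|nz_Tx] := eqVneq (T x) 0.
    by rewrite f_ker // pg2_ptZ // !inE eqxx orbT.
  have -> : f x 0 = T x *: f ((T x)^-1 * x) 0.
    by rewrite -fZ ?trace_fixed // mulVKf // mulr0.
  rewrite pg2_ptZ // !inE /C (imset_f (fun y => pg2_pt (f y 0))) ?orbT //.
  by rewrite inE mul1r traceZ ?mulVf ?rpredV ?trace_fixed.
apply: leq_trans (subset_leq_card sub) _.
rewrite (leq_trans (leq_card_setU _ _)) // cards1 leq_add2r.
rewrite (leq_trans (leq_card_setU _ _)) // leq_add //.
  by rewrite (leq_trans (leq_imset_card _ _)) // cardsT.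
by rewrite (leq_trans (leq_imset_card _ _)) // card_trace_fiber ?oner_eq0.
Qed.

End RedeiSet.

Section Construction.
Variables (be nu d mu : F).
Hypotheses (beK : be \notin K) (Tnu : T nu = 1) (dK : d \in K).
Let b := T (nu * be).
Let g := T (nu * (be * be)).

Lemma fixed_lin_comb_neq0 y c : y \in K -> c \in K -> c != 0 -> y + be * c != 0.
Proof.
move=> yK cK nz_c; apply: contraNneq beK => /(canRL (addKr y)); rewrite addr0 => bec.
by rewrite -(mulfK nz_c be) bec rpredM ?rpredN ?rpredV.
Qed.

Lemma nu_neq0 : nu != 0.
Proof. by apply: contra_eq_neq Tnu => ->; rewrite raddf0 eq_sym oner_neq0. Qed.

Lemma trace_dnu y : y \in K -> T (d * nu * y) = d * y.
Proof. by move=> yK; rewrite mulrC !traceZ // Tnu mulr1 mulrC. Qed.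

(* In the next two lemmas the three equations are the coordinates of
   [redei_map x c = a *: (redei_map x' c' *m rot)], with [c' = 0] in the first. *)
Lemma rot_coincidence0 x c x' a : c \in K -> c != 0 -> a != 0 ->
  x + d * nu * c = 0 -> T x + be * c = a * (nu^-1 * x') -> c = a * T x' ->
  d = b - 1.
Proof.
move=> cK nz_c nz_a E1 E2 E3.
have Tx'E : T x' = c / a by rewrite E3 mulrC mulKf.
have x'E : x' = c / a * (nu * be - d * nu).
  apply: (mulfI (invr_neq0 nu_neq0)); apply: (mulfI nz_a); rewrite -E2.
  have -> : x = - (d * nu * c) by apply/eqP; rewrite -addr_eq0 E1.
  rewrite raddfN /= trace_dnu //; field.
  by rewrite nz_a nu_neq0.
have caK : c / a \in K by rewrite -Tx'E trace_fixed.
have : T x' * 1 = T x' * (b - d).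
  by rewrite mulr1 {2}Tx'E {1}x'E traceZ // raddfB /= (traceZ _ dK) Tnu mulr1.
have nz_Tx' : T x' != 0 by rewrite Tx'E mulf_neq0 ?invr_eq0.
by move/(mulfI nz_Tx') ->; ring.
Qed.

Lemma rot_coincidence x c x' c' a :
  c \in K -> c' \in K -> c' != 0 -> a != 0 ->
  x + d * nu * c = a * (mu * c') ->
  T x + be * c = a * (nu^-1 * (x' + d * nu * c')) ->
  c = a * (T x' + be * c') ->
  exists2 rho, rho \in K &
    (T ((rho + be)^-1 * mu) - d) * (rho + b) = rho * (1 - b) - g + d.
Proof.
move=> cK c'K nz_c' nz_a E1 E2 E3.
pose rho := T x' / c'.
have rhoK : rho \in K by rewrite rpredM ?rpredV ?trace_fixed.
have Tx' : T x' = rho * c' by rewrite mulfVK.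
have nz_rbe : rho + be != 0 by rewrite -[be]mulr1 fixed_lin_comb_neq0 ?rpred1 ?oner_eq0.
pose kap := T ((rho + be)^-1 * mu) - d.
have kapK : kap \in K by rewrite rpredB ?trace_fixed.
have xE : x = c * ((rho + be)^-1 * mu) - d * nu * c.
  rewrite -[x](addrK (d * nu * c)) E1 E3 Tx'; congr (_ - _).
  by field.
have Tx : T x = c * kap by rewrite xE raddfB /= traceZ // trace_dnu // /kap; ring.
have x'E : x' = c' * (nu * ((rho + be) * (kap + be))) - d * nu * c'.
  rewrite -[x'](addrK (d * nu * c')); congr (_ - _).
  apply: (mulfI (invr_neq0 nu_neq0)); apply: (mulfI nz_a).
  rewrite -E2 Tx E3 Tx'; field.
  by rewrite nu_neq0.
exists rho => //.
have : T x' = c' * (rho * kap + (rho + kap) * b + g - d).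
  rewrite x'E raddfB /= trace_dnu // traceZ //.
  have -> : nu * ((rho + be) * (kap + be)) =
            rho * kap * nu + (rho + kap) * (nu * be) + nu * (be * be) by ring.
  rewrite !raddfD /= (traceZ _ (rpredM rhoK kapK)) (traceZ _ (rpredD rhoK kapK)).
  by rewrite Tnu /b /g; ring.
rewrite Tx' mulrC => /(mulfI nz_c') rho_eq.
apply/eqP; rewrite -/kap -subr_eq0.
have -> : kap * (rho + b) - (rho * (1 - b) - g + d) =
          (rho * kap + (rho + kap) * b + g - d) - rho by ring.
by rewrite -rho_eq subrr.
Qed.

Definition rot : 'M[F]_3 := \matrix_(i < 3) [:: row3 0 nu^-1 0; row3 0 0 1; row3 mu 0 0]`_i.

Lemma row3_rot y1 y2 y3 : row3 y1 y2 y3 *m rot = row3 (mu * y3) (nu^-1 * y1) y2.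
Proof.
rewrite mulmx_sum_row !big_ord_recl big_ord0 /= !rowK !mxE /= addr0 !row3Z !row3D.
by congr row3; ring.
Qed.

Hypothesis nz_mu : mu != 0.

Lemma rot_cube : rot ^+ 3 = (mu / nu)%:M.
Proof.
apply/row_matrixP => i; rewrite !rowE mul_mx_scalar; set u := delta_mx 0 i.
rewrite !exprS expr0 mulr1 -!mulmxE !mulmxA (row3_eta u) !row3_rot row3Z.
by congr row3; ring.
Qed.

Lemma rot_unitmx : rot \in unitmx.
Proof.
have : rot ^+ 3 \is a GRing.unit.
  by rewrite rot_cube unitmxE det_scalar unitfE expf_neq0 // mulf_neq0 ?invr_eq0 ?nu_neq0.
by rewrite unitrX_pos.
Qed.

Hypotheses (d_neq1 : d != b - 1) (d_neq2 : d != g + b * (1 - b)).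
(* By [rot_coincidence], a common point with [c' != 0] forces [T ((rho + be)^-1 * mu)] to take
   this value for [rho = T x' / c']. *)
Hypothesis mu_avoid : {in [predD1 K & - b], forall rho,
  T ((rho + be)^-1 * mu) != d + (rho * (1 - b) - g + d) / (rho + b)}.

Lemma no_coincidence rho : rho \in K ->
  (T ((rho + be)^-1 * mu) - d) * (rho + b) != rho * (1 - b) - g + d.
Proof.
move=> rhoK; have [rb0|nz_rb] := eqVneq (rho + b) 0.
  have rho_b : rho = - b by apply/eqP; rewrite -addr_eq0 rb0.
  rewrite rb0 mulr0 eq_sym; apply: contra_neq d_neq2 => e.
  by apply/eqP; rewrite -subr_eq0; apply/eqP; rewrite -[RHS]e rho_b; ring.
have rho_avoid : rho \in [predD1 K & - b].
  by rewrite inE rhoK andbT; apply: contra_neq nz_rb => ->; rewrite addNr.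
by apply: contra_neq (mu_avoid rho_avoid) => <-; rewrite mulfK // [d + _]addrC subrK.
Qed.

Definition redei_map (x c : F) : 'rV[F]_3 := row3 (x + d * nu * c) (T x + be * c) c.

Lemma redei_map_param : redei_param redei_map (row3 1 0 0).
Proof.
split=> [x1 c1 x2 c2|k x c kK|x c _|x Tx0]; rewrite /redei_map.
- by rewrite row3B raddfB /=; congr row3; ring.
- by rewrite row3Z traceZ //; congr row3; ring.
- by move/eqP; rewrite row3_eq0 => /and3P[/eqP + _ /eqP c0]; rewrite c0 mulr0 addr0.
- by rewrite row3Z Tx0; congr row3; ring.
Qed.

Lemma redei_map_rot_neq x c x' c' :
  (x, c) \in redei_domain -> (x', c') \in redei_domain ->
  pg2_pt (redei_map x c) != pg2_pt (redei_map x' c' *m rot).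
Proof.
move=> /redei_domainP[cK nz_xc] /redei_domainP[c'K nz_xc'].
apply/pg2_pt_eqP => -[a nz_a]; rewrite row3_rot row3Z => /row3_inj[E1 E2 E3].
have [c'0|nz_c'] := eqVneq c' 0.
  move: E1 E2 E3; rewrite c'0 !mulr0 !addr0 => E1 E2 E3.
  have [c0|nz_c] := eqVneq c 0.
    by move: E1 nz_xc; rewrite c0 mulr0 addr0 => ->; rewrite eqxx.
  by move: d_neq1; rewrite (rot_coincidence0 cK nz_c nz_a E1 E2 E3) eqxx.
have [rho rhoK] := rot_coincidence cK c'K nz_c' nz_a E1 E2 E3.
exact/eqP/no_coincidence.
Qed.

Definition rot_set i := redei_set (fun x c => redei_map x c *m rot ^+ i).

Lemma rot_set_param i :
  redei_param (fun x c => redei_map x c *m rot ^+ i) (row3 1 0 0 *m rot ^+ i).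
Proof. by apply: redei_param_mulmx redei_map_param; rewrite unitrX ?rot_unitmx. Qed.

Lemma rot_set_disjoint i j : (i < j < 3)%N -> [disjoint rot_set i & rot_set j].
Proof.
(* After cancelling [rot ^+ i] it remains to treat [j - i = 1]; the case [j - i = 2] reduces
   to it after one more rotation, as [rot ^+ 3] is scalar. *)
case/andP=> lt_ij lt_j3; rewrite -setI_eq0; apply/eqP/setP => P; rewrite !inE.
apply/andP => -[/imsetP[[x c] D ->] /imsetP[[x' c'] D' /= /eqP]].
rewrite -(subnK (ltnW lt_ij)) exprD -mulmxE mulmxA pg2_pt_mulmx ?unitrX ?rot_unitmx //.
have /orP[/eqP-> | /eqP->] : ((j - i == 1) || (j - i == 2))%N by lia.
  by rewrite expr1; apply/negP/redei_map_rot_neq.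
rewrite -(pg2_pt_mulmx _ _ rot_unitmx) -mulmxA [in rot ^+ 2 *m rot]mulmxE -exprSr.
rewrite rot_cube mul_mx_scalar pg2_ptZ ?mulf_neq0 ?invr_eq0 ?nu_neq0 // eq_sym.
exact/negP/redei_map_rot_neq.
Qed.

Lemma rot_sets_blocking t : (t <= 3)%N ->
  pg2_tfold_blocking_set t (\bigcup_(i < t) rot_set i) /\
  (#|\bigcup_(i < t) rot_set i| <= t * (#|F| + r ^ s.-1 + 1))%N.
Proof.
elim: t => [_|t IHt lt_t3].
  by rewrite big_ord0 cards0; split=> //; split=> [P|]; rewrite ?inE.
have [blockB cardB] := IHt (ltnW lt_t3); rewrite big_ord_recr /=; split.
  rewrite -addn1; apply: pg2_blocking_setU blockB (redei_set_blocking (rot_set_param t)).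
  rewrite disjoint_sym; apply: bigcup_disjoint => i _; rewrite disjoint_sym.
  by apply: rot_set_disjoint; rewrite ltn_ord.
apply: leq_trans (leq_card_setU _ _) _; rewrite mulSnr leq_add //.
exact: card_redei_set (rot_set_param t).
Qed.

End Construction.

Lemma exists_tfold_blocking_set_le t : (t <= 3)%N ->
  exists2 B : {set {set 'rV[F]_3}},
    pg2_tfold_blocking_set t B & (#|B| <= t * (#|F| + r ^ s.-1 + 1))%N.
Proof.
move=> le_t3; have [be [nu [d [beK Tnu dK d_neq1 d_neq2]]]] := exists_params.
pose b := T (nu * be); pose g := T (nu * (be * be)).
have [|rho /andP[_ rhoK]|mu nz_mu mu_avoid] := @exists_trace_avoid _ [predD1 K & - b]
  (fun rho => (rho + be)^-1) (fun rho => d + (rho * (1 - b) - g + d) / (rho + b)).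
- by move: card_fixed_field; rewrite (cardD1 (- b)) rpredN /b trace_fixed.
- by rewrite invr_eq0 -[be]mulr1 fixed_lin_comb_neq0 ?rpred1 ?oner_eq0.
have [blockB cardB] := rot_sets_blocking beK Tnu dK nz_mu d_neq1 d_neq2 mu_avoid le_t3.
by exists (\bigcup_(i < t) rot_set be nu d mu i).
Qed.

End Trace.

Lemma exists_tfold_blocking_set (F : finFieldType) (r s t : nat) :
  (1 < r)%N -> (1 < s)%N -> [pchar F].-nat r -> #|F| = (r ^ s)%N -> (t <= 3)%N ->
  exists B : {set {set 'rV[F]_3}},
    pg2_tfold_blocking_set t B /\ #|B| = (t * (#|F| + r ^ s.-1 + 1))%N.
Proof.
move=> r_gt1 s_gt1 r_pchar cardF le_t3.
have [B0 blockB0 cardB0] := exists_tfold_blocking_set_le r_gt1 s_gt1 r_pchar cardF le_t3.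
pose S := [set P : {set 'rV[F]_3} | pg2_point P].
have sB0S : B0 \subset S by apply/subsetP => P /blockB0.1; rewrite inE.
have [|B [sB0B sBS cardB]] := @exists_subset_card _ B0 S (t * (#|F| + r ^ s.-1 + 1)) sB0S.
  rewrite cardB0 /=; apply: leq_trans (card_pg2_points F).
  have rR : (r * r ^ s.-1)%N = #|F| by rewrite cardF -expnS prednK // ltnW.
  have q_ge4 : (4 <= #|F|)%N.
    rewrite cardF (leq_trans (_ : 4 <= r ^ 2)%N) ?leq_exp2l //.
    by rewrite (leq_trans (_ : 4 <= 2 ^ 2)%N) // leq_exp2r.
  have le_3 : (t * (#|F| + r ^ s.-1 + 1) <= 3 * (#|F| + r ^ s.-1 + 1))%N.
    by rewrite leq_mul2r le_t3 orbT.
  have le_R : (2 * r ^ s.-1 <= #|F|)%N by rewrite -rR leq_mul2r r_gt1 orbT.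
  have le_qq : (4 * #|F| <= #|F| * #|F|)%N by rewrite leq_mul2r q_ge4 orbT.
  by move: le_3 le_R le_qq q_ge4; move: (r ^ s.-1)%N #|F| (#|F| * #|F|)%N => R q Q; lia.
exists B; split=> //; apply: pg2_blocking_setS sB0B _ blockB0.
by move=> P /(subsetP sBS); rewrite inE.
Qed.

Theorem theorem1p2 (p n : nat) (F : finFieldType) :
  prime p -> (1 < n)%N -> #|F| = (p ^ n)%N ->
  forall t : nat, t = 2%N \/ t = 3%N ->
  exists B : {set {set 'rV[F]_3}},
    pg2_tfold_blocking_set t B /\
    #|B| = (t * (p ^ n + p ^ (n * (pdiv n - 1) %/ pdiv n) + 1))%N.
Proof.
move=> p_pr n_gt1 cardF t t23.
set s := pdiv n; set e := (n %/ s)%N.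
have s_gt1 : (1 < s)%N by rewrite prime_gt1 ?pdiv_prime.
have n_es : n = (e * s)%N by rewrite divnK ?pdiv_dvd.
have r_gt1 : (1 < p ^ e)%N.
  by rewrite -(expn0 p) ltn_exp2l ?prime_gt1 // divn_gt0 ?pdiv_leq // ltnW.
have r_pchar : [pchar F].-nat (p ^ e)%N.
  by rewrite pnatX (eq_pnat _ (pcharf_eq (card_finPcharP cardF p_pr))) pnat_id.
have cardFr : #|F| = ((p ^ e) ^ s)%N by rewrite cardF -expnM -n_es.
have le_t3 : (t <= 3)%N by case: t23 => ->.
have [B [blockB cardB]] := exists_tfold_blocking_set r_gt1 s_gt1 r_pchar cardFr le_t3.
exists B; split=> //; rewrite cardB cardF -expnM subn1.
by rewrite [in (n * _)%N]n_es mulnAC mulnK // ltnW.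
Qed.
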